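(* For every $N\ge3$, $\mathcal G_1(N)\cap\mathcal G_2(N)=\emptyset$.
   Context: Board and moves: $G=(V,E)$ finite, simple, connected, undirected; $N\ge3$ tokens, cops $C_1,\dots,C_{N-1}$ and robber $R$ (token $N$). A state is $s=(x^1,\dots,x^N,n)$ with $x^i\in V$ the position of token $i$ and $n$ the token to move; $S^n$ is the set of states with token $n$ to move; $s$ is a capture state if $x^i=x^N$ for some $i\le N-1$, and $S_{nc}$ is the set of noncapture states. In each turn the token to move moves to a vertex of its closed neighbourhood; order $C_1,\dots,C_{N-1},R,C_1,\dots$. State cop number. For $s\in S_{nc}$, $c(G|s)=c_N(G|s)$ is the minimum $k\in\{1,\dots,N-1\}$ for which there exist $k$ cops and strategies for them such that, starting from $s$, a capture (by any cop) occurs whatever the other $N-k$ tokens (including $R$) do; $c(G|s)=\infty$ if no such $k$ exists. $c(G)$ is the classical cop number of $G$. Graph classes. $\mathcal G(N)=\{G: c(G)>N-1\}$; $\mathcal G_1(N)=\{G\in\mathcal G(N):\exists s\in S_{nc}\text{ with } c(G|s)\in\{2,\dots,N-1\}\}$; $\mathcal G_2(N)=\{G\in\mathcal G(N): c(G|s)=\infty\text{ for all } s\in S^N\cap S_{nc}\}$. *)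

From mathcomp Require Import all_boot.
Set Implicit Arguments. Unset Strict Implicit. Unset Printing Implicit Defensive.

Section CopsRobber.
Variable T : finType.
Variable e : rel T.
Variable N : nat.

Definition cnbr (x y : T) : bool := (x == y) || e x y.

(* Tokens are 'I_N : indices 0..N-2 are the cops C_1..C_{N-1},
   index N-1 is the robber R. *)
Definition isCop (i : 'I_N) : bool := (val i < N.-1).
Definition isRobber (i : 'I_N) : bool := (val i == N.-1).

(* A state: positions of the N tokens and the token to move. *)
Definition state : Type := ({ffun 'I_N -> T} * 'I_N)%type.
Definition pos (s : state) : {ffun 'I_N -> T} := s.1.
Definition tok (s : state) : 'I_N := s.2.

Definition capture (s : state) : Prop :=
  exists i j : 'I_N, isCop i /\ isRobber j /\ pos s i = pos s j.
Definition noncapture (s : state) : Prop := ~ capture s.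

(* One turn: token [tok s] moves within its closed neighbourhood, everybody
   else stays, and the turn passes to the next token cyclically
   (C_1,...,C_{N-1},R,C_1,...). *)
Definition step (s s' : state) : Prop :=
  tok s' = ordS (tok s) /\
  (forall j, j != tok s -> pos s' j = pos s j) /\
  cnbr (pos s (tok s)) (pos s' (tok s)).

(* A (history-dependent) strategy for a coalition K of tokens: given the
   history of previous states and the current state, the vertex the
   token to move goes to. It must be legal. *)
Definition strategy := seq state -> state -> T.
Definition legal_strategy (K : {set 'I_N}) (sigma : strategy) : Prop :=
  forall h s, tok s \in K -> cnbr (pos s (tok s)) (sigma h s).

Definition forces (K : {set 'I_N}) (s : state) : Prop :=
  exists sigma : strategy, legal_strategy K sigma /\
    forall p : nat -> state, p 0 = s ->
      (forall t, step (p t) (p t.+1)) ->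
      (forall t, tok (p t) \in K ->
         pos (p t.+1) (tok (p t)) = sigma [seq p i | i <- iota 0 t] (p t)) ->
      exists t, capture (p t).

Definition kcops_win (k : nat) (s : state) : Prop :=
  exists K : {set 'I_N}, (forall i, i \in K -> isCop i) /\ #|K| = k /\ forces K s.

(* c(G|s) = c, where c = Some k (k finite) or None (infinity) *)
Definition state_cop_number_is (s : state) (c : option nat) : Prop :=
  match c with
  | Some k => 1 <= k <= N.-1 /\ kcops_win k s /\
              forall k', 1 <= k' < k -> ~ kcops_win k' s
  | None => forall k, 1 <= k <= N.-1 -> ~ kcops_win k s
  end.

(* Classical game with k cops: cops place (C 0), robber places (R 0); then
   cops move simultaneously (C t.+1) and robber moves (R t.+1), etc. *)
Definition cstate (k : nat) : Type := ({ffun 'I_k -> T} * T)%type.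

Definition classical_cops_win (k : nat) : Prop :=
  exists (c0 : {ffun 'I_k -> T}) (sigma : seq (cstate k) -> cstate k -> {ffun 'I_k -> T}),
    (forall (h : seq (cstate k)) (c : {ffun 'I_k -> T}) (r : T) (i : 'I_k), cnbr (c i) (sigma h (c, r) i)) /\
    forall (C : nat -> {ffun 'I_k -> T}) (R : nat -> T),
      C 0 = c0 ->
      (forall t, C t.+1 = sigma [seq (C j, R j) | j <- iota 0 t] (C t, R t)) ->
      (forall t, cnbr (R t) (R t.+1)) ->
      exists t (i : 'I_k), C t i = R t \/ C t.+1 i = R t.

Definition cop_number_gt (m : nat) : Prop :=
  forall k, k <= m -> ~ classical_cops_win k.

Definition inG (n : nat) : Prop := cop_number_gt n.-1.

Definition inG1 : Prop :=
  inG N /\ exists s : state, noncapture s /\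
    exists k, 2 <= k <= N.-1 /\ state_cop_number_is s (Some k).

Definition inG2 : Prop :=
  inG N /\ forall s : state, isRobber (tok s) -> noncapture s ->
    state_cop_number_is s None.

End CopsRobber.

(* If some cop that still moves before the robber is next to the robber, one
   cop can capture right away.  Otherwise no capture can happen before the
   robber's turn, so the k cops may simply play their winning strategy up to
   that turn: the state reached is a noncapture state with the robber to move
   from which the same k cops still win, i.e. one of finite state cop number. *)

From mathcomp Require Import all_boot zify.
Set Implicit Arguments. Unset Strict Implicit. Unset Printing Implicit Defensive.

Section Plays.
Variables (T : finType) (e : rel T) (N : nat).

Definition hist (p : nat -> state T N) t := [seq p i | i <- iota 0 t].

Definition is_play (p : nat -> state T N) := forall t, step e (p t) (p t.+1).

Definition follows (K : {set 'I_N}) (sigma : strategy T N) (p : nat -> state T N) :=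
  forall t, tok (p t) \in K -> pos (p t.+1) (tok (p t)) = sigma (hist p t) (p t).

Definition winning K sigma (s : state T N) :=
  forall p, p 0 = s -> is_play p -> follows K sigma p -> exists t, capture (p t).

Lemma hist_addn (p : nat -> state T N) m d :
  hist p (m + d) = hist p m ++ hist (fun i => p (m + i)) d.
Proof.
rewrite /hist iotaD map_cat add0n; congr (_ ++ _).
by rewrite -[in iota m _](addn0 m) iotaDl -map_comp.
Qed.

Section OnePlay.
Variable p : nat -> state T N.
Hypothesis play_p : is_play p.

Lemma tok_play t : tok (p 0) + t < N -> val (tok (p t)) = tok (p 0) + t.
Proof.
elim: t => [|t IH] ltN; first by rewrite addn0.
have [-> _] := play_p t.
by rewrite /= IH ?modn_small //; lia.
Qed.

Lemma pos_idle (j : 'I_N) u t :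
  u <= t -> (forall w, u <= w < t -> tok (p w) != j) -> pos (p t) j = pos (p u) j.
Proof.
elim: t => [|t IH] le_ut idle; first by have -> : u = 0 by lia.
have [-> // | lt_ut] : u = t.+1 \/ u < t.+1 by lia.
have [_ [stay _]] := play_p t.
rewrite stay; last by rewrite eq_sym idle //; lia.
by apply: IH => [|w w_in]; [lia | apply: idle; lia].
Qed.

(* In the first round, before the turn passes back to token 0, token [j] moves
   only at time [j - tok (p 0)]. *)
Lemma pos_first_round_idle (j : 'I_N) t : tok (p 0) + t <= N ->
  j < tok (p 0) \/ tok (p 0) + t <= j -> pos (p t) j = pos (p 0) j.
Proof.
move=> leN j_out; apply: pos_idle => // w w_lt.
by apply/eqP => /(congr1 val); rewrite tok_play /=; lia.
Qed.

Lemma cnbr_first_round (j : 'I_N) t : tok (p 0) + t <= N -> cnbr e (pos (p 0) j) (pos (p t) j).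
Proof.
move=> leN.
have [/andP [le_aj lt_j] | j_out] := boolP ((tok (p 0) <= j) && (j < tok (p 0) + t)).
  set u := j - tok (p 0).
  have tok_u : tok (p u) = j by apply: val_inj; rewrite tok_play /=; lia.
  have before : pos (p u) j = pos (p 0) j.
    by apply: pos_first_round_idle; lia.
  have after : pos (p t) j = pos (p u.+1) j.
    apply: pos_idle => [|w w_in]; first lia.
    by apply/eqP => /(congr1 val); rewrite tok_play /=; lia.
  have [_ [_]] := play_p u.
  by rewrite tok_u before after.
rewrite pos_first_round_idle //; first by rewrite /cnbr eqxx.
by move: j_out; rewrite negb_and -!ltnNge; lia.
Qed.

End OnePlay.

Section Follow.
Variables (K : {set 'I_N}) (sigma : strategy T N).

Definition follow_step (h : seq (state T N)) (x : state T N) : state T N :=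
  ([ffun j => if (j == tok x) && (tok x \in K) then sigma h x else pos x j],
   ordS (tok x)).

Fixpoint follow_rec (s : state T N) n : seq (state T N) * state T N :=
  if n is n'.+1 then
    let hx := follow_rec s n' in (rcons hx.1 hx.2, follow_step hx.1 hx.2)
  else ([::], s).

Definition follow s t := (follow_rec s t).2.

Lemma follow_rec_hist s t : (follow_rec s t).1 = hist (follow s) t.
Proof.
elim: t => [|t IH] //=.
by rewrite IH /hist -addn1 iotaD map_cat cats1.
Qed.

Lemma follow_is_play s : legal_strategy e K sigma -> is_play (follow s).
Proof.
move=> legal t; split=> //; split=> [j /negbTE neq_j | ].
  by rewrite /pos /= ffunE neq_j.
rewrite /pos /= ffunE eqxx /=.
by case: ifP => [/legal | _]; [ | rewrite /cnbr eqxx].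
Qed.

Lemma follow_follows s : follows K sigma (follow s).
Proof. by move=> t in_K; rewrite /pos /= ffunE eqxx in_K -follow_rec_hist. Qed.

End Follow.

Section Splice.
Variables (q p : nat -> state T N) (m : nat).
Hypothesis p0 : p 0 = q m.

Definition splice t := if t <= m then q t else p (t - m).

Lemma splice_le t : t <= m -> splice t = q t.
Proof. by rewrite /splice => ->. Qed.

Lemma splice_ge t : m <= t -> splice t = p (t - m).
Proof.
move=> le_mt; rewrite /splice; case: leqP => // le_tm.
have eq_tm : t = m by lia.
by rewrite eq_tm subnn p0.
Qed.

Lemma splice_is_play : is_play q -> is_play p -> is_play splice.
Proof.
move=> play_q play_p t.
have [lt_tm | le_mt] := ltnP t m; first by rewrite !splice_le ?(ltnW lt_tm).
by rewrite !splice_ge ?(leqW le_mt) // subSn.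
Qed.

Lemma hist_splice_le t : t <= m -> hist splice t = hist q t.
Proof.
move=> le_tm; apply/eq_in_map => i; rewrite mem_iota => /andP [_ lt_i].
by rewrite splice_le //; lia.
Qed.

Lemma hist_splice_ge t : m <= t -> hist splice t = hist q m ++ hist p (t - m).
Proof.
move=> /subnKC {1}<-; rewrite hist_addn hist_splice_le //.
by congr (_ ++ _); apply/eq_map => i; rewrite splice_ge ?leq_addr // addKn.
Qed.

Lemma splice_follows K sigma :
  follows K sigma q -> follows K (fun h => sigma (hist q m ++ h)) p ->
  follows K sigma splice.
Proof.
move=> fol_q fol_p t.
have [lt_tm | le_mt] := ltnP t m.
  by rewrite !splice_le ?(ltnW lt_tm) // hist_splice_le ?(ltnW lt_tm) //; apply: fol_q.
by rewrite !splice_ge ?(leqW le_mt) // subSn // hist_splice_ge //; apply: fol_p.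
Qed.

End Splice.

Lemma winning_follow K sigma q m :
  winning K sigma (q 0) -> is_play q -> follows K sigma q ->
  (forall t, t < m -> noncapture (q t)) ->
  winning K (fun h => sigma (hist q m ++ h)) (q m).
Proof.
move=> win play_q fol_q ncap p p0 play_p fol_p.
have [t cap_t] := win (splice q p m) (splice_le q p (leq0n m))
  (splice_is_play p0 play_q play_p) (splice_follows p0 fol_q fol_p).
have [lt_tm | le_mt] := ltnP t m.
  by case: (ncap t lt_tm); rewrite -(splice_le q p (ltnW lt_tm)).
by exists (t - m); rewrite -(splice_ge p0).
Qed.

Lemma forces_winning K s :
  forces e K s <-> exists2 sigma, legal_strategy e K sigma & winning K sigma s.
Proof. by split=> [[sigma []] | [sigma]]; exists sigma. Qed.

End Plays.

Section Game.
Variables (T : finType) (e : rel T) (N : nat).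
Hypothesis N_gt0 : 0 < N.

Definition robber : 'I_N := Ordinal (etrans (ltn_predL N) N_gt0).

Lemma isRobberP (j : 'I_N) : isRobber j -> j = robber.
Proof. by move=> /eqP j_rob; apply: val_inj. Qed.

Definition pounce : strategy T N := fun _ x =>
  if cnbr e (pos x (tok x)) (pos x robber) then pos x robber else pos x (tok x).

Lemma pounce_legal K : legal_strategy e K pounce.
Proof. by move=> h x _; rewrite /pounce; case: ifP; rewrite // /cnbr eqxx. Qed.

Lemma robber_first_round_idle (p : nat -> state T N) t :
  is_play e p -> t <= N.-1 - tok (p 0) -> pos (p t) robber = pos (p 0) robber.
Proof.
move=> play_p le_t; have lt_aN := ltn_ord (tok (p 0)).
by apply: pos_first_round_idle => //=; lia.
Qed.

(* The cop moves before the robber does, so it lands on the robber's vertex. *)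
Lemma adjacent_cop_forces (s : state T N) (i : 'I_N) :
  isCop i -> tok s <= i -> cnbr e (pos s i) (pos s robber) -> forces e [set i] s.
Proof.
move=> cop_i le_si adj; apply/forces_winning; exists pounce; first exact: pounce_legal.
move=> p p0 play_p fol_p; subst s.
have lt_iN : i < N.-1 by [].
set u := i - tok (p 0).
have tok_u : tok (p u) = i by apply: val_inj; rewrite (tok_play play_p) //=; lia.
have pos_i : pos (p u) i = pos (p 0) i.
  by apply: pos_first_round_idle => //; lia.
exists u.+1, i, robber; split=> //; split; first by rewrite /isRobber.
rewrite !robber_first_round_idle //; try lia.
have := fol_p u; rewrite tok_u inE eqxx => /(_ isT) ->.
by rewrite /pounce tok_u pos_i robber_first_round_idle ?adj //; lia.
Qed.

Lemma first_round_noncapture (p : nat -> state T N) t :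
  is_play e p -> noncapture (p 0) ->
  (forall i : 'I_N, isCop i -> tok (p 0) <= i -> ~~ cnbr e (pos (p 0) i) (pos (p 0) robber)) ->
  t <= N.-1 - tok (p 0) -> noncapture (p t).
Proof.
move=> play_p ncap0 far le_t [i [j [cop_i [/isRobberP -> cap]]]].
have lt_iN : i < N.-1 by [].
move: cap; rewrite robber_first_round_idle // => cap.
have [le_ai | lt_ia] := leqP (tok (p 0)) i.
  have leN : tok (p 0) + t <= N by have := ltn_ord (tok (p 0)); lia.
  by have := cnbr_first_round play_p i leN; rewrite cap; apply/negP/far.
apply: ncap0; exists i, robber; split=> //; split; first by rewrite /isRobber.
by rewrite -cap (pos_first_round_idle play_p) //; have := ltn_ord (tok (p 0)); lia.
Qed.

Lemma kcops_win_robber_turn k (s : state T N) :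
  noncapture s -> kcops_win e k s -> ~ kcops_win e 1 s ->
  exists s' : state T N, [/\ isRobber (tok s'), noncapture s' & kcops_win e k s'].
Proof.
move=> ncap_s [K [cops_K [card_K /forces_winning [sigma legal win]]]] no_single.
have [/existsP [i /and3P [cop_i le_si adj]] | /existsPn far] :=
  boolP [exists i, [&& isCop i, tok s <= i & cnbr e (pos s i) (pos s robber)]].
  case: no_single; exists [set i]; split; first by move=> j; rewrite inE => /eqP ->.
  by split; [rewrite cards1 | exact: adjacent_cop_forces].
set q := follow K sigma s; set m := N.-1 - tok s.
have play_q : is_play e q by apply: follow_is_play.
have q0 : q 0 = s by [].
have ncap_q t : t <= m -> noncapture (q t).
  move=> le_tm; apply: (first_round_noncapture play_q); rewrite ?q0 //.
  by move=> i cop_i le_si; have := far i; rewrite cop_i le_si.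
exists (q m); split.
- by apply/eqP; rewrite (tok_play play_q) q0 //=; have := ltn_ord (tok s); lia.
- exact: ncap_q.
- exists K; split=> //; split=> //; apply/forces_winning.
  exists (fun h => sigma (hist q m ++ h)); first by move=> h x; apply: legal.
  apply: winning_follow => //; first exact: follow_follows.
  by move=> t lt_tm; apply: ncap_q; rewrite ltnW.
Qed.

End Game.

Theorem mainTheorem8 (T : finType) (e : rel T) (N : nat) :
  symmetric e -> irreflexive e -> (forall x y : T, connect e x y) ->
  3 <= N ->
  ~ (inG1 e N /\ inG2 e N).
Proof.
move=> _ _ _ N_ge3 [[_ [s [ncap_s [k [k_ge2 [k_range [win_k minimal_k]]]]]]] [_ robber_turn]].
have N_gt0 : 0 < N by lia.
have no_single : ~ kcops_win e 1 s by apply: minimal_k; lia.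
have [s' [rob_s' ncap_s' win_s']] := kcops_win_robber_turn N_gt0 ncap_s win_k no_single.
exact: robber_turn s' rob_s' ncap_s' k k_range win_s'.
Qed.
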